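(* Let $M=\mathbb{S}^1\times[-\rho,\rho]$ carry a metric of the form $ds^2=d\sigma^2+f(\theta,\sigma)^2d\theta^2$, $f>0$ smooth, and suppose there are constants $\alpha>0$, $C\ge0$ with $R\ge-\alpha$ on $M$ and $|k_g|\le C$ on $\partial M$. Let $L$ be the minimum of the lengths of the two boundary components. Then the area $A(M)$ satisfies $$2\rho L e^{-2\rho(\alpha\rho+C)}\le A(M)\le 2\rho L e^{2\rho(\alpha\rho+C)}.$$
   Context: $R$ is the scalar curvature (twice the Gauss curvature) of the metric and $k_g$ the geodesic curvature of the boundary curves $\mathbb{S}^1\times\{\pm\rho\}$; $\theta\in[0,2\pi)$, $\sigma\in[-\rho,\rho]$. *)

From Stdlib Require Import Reals Lra ClassicalEpsilon.
Open Scope R_scope.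

Definition cont2 (f : R -> R -> R) : Prop :=
  forall x y eps, 0 < eps -> exists delta, 0 < delta /\
    forall x' y', Rabs (x' - x) < delta -> Rabs (y' - y) < delta ->
      Rabs (f x' y' - f x y) < eps.

Fixpoint Ck2 (n : nat) (f : R -> R -> R) : Prop :=
  cont2 f /\
  match n with
  | O => True
  | S m => exists fx fy : R -> R -> R,
      (forall x y, derivable_pt_lim (fun t => f t y) x (fx x y)) /\
      (forall x y, derivable_pt_lim (fun t => f x t) y (fy x y)) /\
      Ck2 m fx /\ Ck2 m fy
  end.

Definition smooth2 (f : R -> R -> R) : Prop := forall n, Ck2 n f.

(* Total Riemann integral: the value of RiemannInt when g is Riemann
   integrable on [a,b] (junk otherwise). *)
Definition Rint (g : R -> R) (a b : R) : R :=
  epsilon (inhabits 0)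
    (fun I => exists pr : Riemann_integrable g a b, RiemannInt pr = I).

(* Metric ds^2 = dsigma^2 + f(theta,sigma)^2 dtheta^2, first argument theta,
   second argument sigma. fss = d^2 f / dsigma^2, fs = df/dsigma. *)

(* Scalar curvature R = 2K = -2 f_{sigma sigma} / f. *)
Definition scal_curv (f fss : R -> R -> R) (th s : R) : R :=
  - 2 * fss th s / f th s.

(* Geodesic curvature of the boundary curves sigma = rho and sigma = -rho
   (w.r.t. the outward normal): k_g = f_sigma/f at sigma = rho and
   -f_sigma/f at sigma = -rho. Only |k_g| enters the statement. *)
Definition geod_curv_top (f fs : R -> R -> R) (rho th : R) : R :=
  fs th rho / f th rho.
Definition geod_curv_bot (f fs : R -> R -> R) (rho th : R) : R :=
  - (fs th (-rho) / f th (-rho)).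

Definition bdry_length (f : R -> R -> R) (s : R) : R :=
  Rint (fun th => f th s) 0 (2 * PI).

Definition area (f : R -> R -> R) (rho : R) : R :=
  Rint (fun th => Rint (fun s => f th s) (- rho) rho) 0 (2 * PI).

(* For each fixed θ the profile h(σ) = f(θ,σ) satisfies h''/h = -R/2 <= α/2, so
   its logarithmic derivative φ = h'/h obeys the Riccati inequality
   φ' = h''/h - φ² <= α/2.  Integrating from the boundary, where |φ| = |k_g| <= C,
   gives |φ| <= C + αρ on [-ρ,ρ]; hence ln h varies by at most 2ρ(αρ+C) and h is
   within a factor e^{2ρ(αρ+C)} of its boundary values.  Integrating over σ and
   then over θ compares the area with 2ρ times either boundary length. *)

From Stdlib Require Import Reals Lra ClassicalEpsilon FunctionalExtensionality.
From Coquelicot Require Import Coquelicot.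
Open Scope R_scope.

Lemma Rint_eq_RInt (g : R -> R) (a b : R) :
  a <= b -> (forall x, a <= x <= b -> continuity_pt g x) ->
  Rint g a b = RInt g a b.
Proof.
  intros Hab Hg.
  pose proof (continuity_implies_RiemannInt Hab Hg) as pr.
  unfold Rint.
  destruct (epsilon_spec (inhabits 0)
              (fun I => exists pr : Riemann_integrable g a b, RiemannInt pr = I))
    as [pr' <-].
  - exists (RiemannInt pr); now exists pr.
  - symmetry; apply RInt_Reals.
Qed.

Lemma ex_RInt_continuity_pt (g : R -> R) (a b : R) :
  a <= b -> (forall x, a <= x <= b -> continuity_pt g x) -> ex_RInt g a b.
Proof.
  intros Hab Hg. apply ex_RInt_Reals_1, continuity_implies_RiemannInt; assumption.
Qed.

Lemma RInt_scal_bounds (g h : R -> R) (a b c1 c2 : R) :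
  a <= b -> ex_RInt g a b -> ex_RInt h a b ->
  (forall x, a <= x <= b -> c1 * g x <= h x <= c2 * g x) ->
  c1 * RInt g a b <= RInt h a b <= c2 * RInt g a b.
Proof.
  intros Hab Hg Hh Hgh.
  rewrite <- (RInt_scal g a b c1 Hg : RInt (fun x => c1 * g x) a b = c1 * RInt g a b).
  rewrite <- (RInt_scal g a b c2 Hg : RInt (fun x => c2 * g x) a b = c2 * RInt g a b).
  split; apply RInt_le; auto using ex_RInt_scal;
    intros x Hx; apply Hgh; lra.
Qed.

Lemma continuity_RInt_param (g gx : R -> R -> R) (a b : R) :
  (forall x t, derivable_pt_lim (fun u => g u t) x (gx x t)) ->
  cont2 gx ->
  (forall x, ex_RInt (fun t => g x t) a b) ->
  forall x, continuity_pt (fun u => RInt (fun t => g u t) a b) x.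
Proof.
  intros Hgx Hc Hint x.
  apply derivable_continuous_pt.
  eexists; apply is_derive_Reals, is_derive_RInt_param.
  - apply filter_forall; intros u t _.
    exists (gx u t); apply is_derive_Reals, Hgx.
  - intros t _ eps.
    destruct (Hc x t eps (cond_pos eps)) as [d [Hd Hclose]].
    exists (mkposreal d Hd); intros u v Hu Hv.
    rewrite !(is_derive_unique _ _ _ (proj2 (is_derive_Reals _ _ _) (Hgx _ _))).
    now apply Hclose.
  - apply filter_forall, Hint.
Qed.

Lemma increment_le_of_derive_le (g g' : R -> R) (a b M : R) :
  a <= b ->
  (forall c, a <= c <= b -> derivable_pt_lim g c (g' c)) ->
  (forall c, a <= c <= b -> g' c <= M) ->
  g b - g a <= M * (b - a).
Proof.
  intros Hab Hd HM.
  destruct (Rle_lt_or_eq_dec _ _ Hab) as [Hlt | <-]; [| lra].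
  destruct (MVT_cor2 g g' a b Hlt Hd) as [c [-> Hc]].
  apply Rmult_le_compat_r; [lra | apply HM; lra].
Qed.

Section PositiveProfile.

Variables (h h' h'' : R -> R) (a b kappa C : R).
Hypothesis le_ab : a <= b.
Hypothesis kappa_nonneg : 0 <= kappa.
Hypothesis h_pos : forall s, 0 < h s.
Hypothesis h_deriv : forall s, derivable_pt_lim h s (h' s).
Hypothesis h'_deriv : forall s, derivable_pt_lim h' s (h'' s).
Hypothesis h''_le : forall s, a <= s <= b -> h'' s / h s <= kappa.
Hypothesis log_deriv_a : Rabs (h' a / h a) <= C.
Hypothesis log_deriv_b : Rabs (h' b / h b) <= C.

Let phi s := h' s / h s.

Lemma derivable_pt_lim_log_deriv s :
  derivable_pt_lim phi s (h'' s / h s - phi s ^ 2).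
Proof.
  assert (Hn : h s <> 0) by (specialize (h_pos s); lra).
  replace (h'' s / h s - phi s ^ 2) with ((h'' s * h s - h' s * h' s) / (h s)²)
    by (unfold phi, Rsqr; field; exact Hn).
  exact (derivable_pt_lim_div h' h s _ _ (h'_deriv s) (h_deriv s) Hn).
Qed.

Lemma log_deriv_bound s : a <= s <= b -> Rabs (phi s) <= C + kappa * (b - a).
Proof.
  intros Hs.
  assert (Hriccati : forall c, a <= c <= b -> h'' c / h c - phi c ^ 2 <= kappa)
    by (intros c Hc; specialize (h''_le c Hc); nra).
  assert (from_a := increment_le_of_derive_le phi _ a s kappa ltac:(lra)
    (fun c _ => derivable_pt_lim_log_deriv c) ltac:(intros; apply Hriccati; lra)).
  assert (to_b := increment_le_of_derive_le phi _ s b kappa ltac:(lra)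
    (fun c _ => derivable_pt_lim_log_deriv c) ltac:(intros; apply Hriccati; lra)).
  apply Rabs_le_between in log_deriv_a, log_deriv_b.
  apply Rabs_le; unfold phi in *; nra.
Qed.

Lemma derivable_pt_lim_ln_profile s : derivable_pt_lim (fun x => ln (h x)) s (phi s).
Proof.
  replace (phi s) with (/ h s * h' s) by (unfold phi; field; specialize (h_pos s); lra).
  exact (derivable_pt_lim_comp h ln s _ _ (h_deriv s) (derivable_pt_lim_ln _ (h_pos s))).
Qed.

Lemma profile_le_exp s t : a <= s <= b -> a <= t <= b ->
  h s <= h t * exp ((C + kappa * (b - a)) * (b - a)).
Proof.
  intros Hs Ht.
  destruct (MVT_abs (fun x => ln (h x)) phi t s (fun c _ => derivable_pt_lim_ln_profile c))
    as [c [Hmvt Hc]].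
  assert (Hc' : a <= c <= b) by (unfold Rmin, Rmax in Hc; destruct Rle_dec; lra).
  assert (Hphi := log_deriv_bound c Hc').
  assert (Hdist : Rabs (s - t) <= b - a) by (apply Rabs_le; lra).
  assert (Hincr : ln (h s) - ln (h t) <= (C + kappa * (b - a)) * (b - a)).
  { eapply Rle_trans; [apply Rle_abs | rewrite Hmvt].
    apply Rmult_le_compat; auto using Rabs_pos. }
  rewrite <- (exp_ln (h s)), <- (exp_ln (h t)), <- exp_plus by apply h_pos.
  apply Rnot_lt_le; intro Hlt; apply exp_lt_inv in Hlt; lra.
Qed.

Lemma profile_within_exp s t : a <= s <= b -> a <= t <= b ->
  let K := (C + kappa * (b - a)) * (b - a) in
  h t * exp (- K) <= h s <= h t * exp K.
Proof.
  intros Hs Ht K.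
  split; [| now apply profile_le_exp].
  assert (Hts := profile_le_exp t s Ht Hs); fold K in Hts.
  rewrite exp_Ropp.
  apply Rmult_le_reg_r with (exp K); [apply exp_pos |].
  field_simplify; [lra | apply Rgt_not_eq, exp_pos].
Qed.

End PositiveProfile.

Section Integrals.

Variables (f fs fx : R -> R -> R) (rho : R).
Hypothesis rho_pos : 0 < rho.
Hypothesis fs_deriv : forall th s, derivable_pt_lim (fun t => f th t) s (fs th s).
Hypothesis fx_deriv : forall th s, derivable_pt_lim (fun t => f t s) th (fx th s).
Hypothesis fx_cont : cont2 fx.

Lemma continuity_pt_sigma th s : continuity_pt (fun t => f th t) s.
Proof. apply derivable_continuous_pt; exists (fs th s); apply fs_deriv. Qed.

Lemma continuity_pt_theta s th : continuity_pt (fun t => f t s) th.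
Proof. apply derivable_continuous_pt; exists (fx th s); apply fx_deriv. Qed.

Lemma ex_RInt_sigma th : ex_RInt (fun s => f th s) (- rho) rho.
Proof. apply ex_RInt_continuity_pt; [lra | intros; apply continuity_pt_sigma]. Qed.

Lemma ex_RInt_theta s : ex_RInt (fun th => f th s) 0 (2 * PI).
Proof.
  apply ex_RInt_continuity_pt; [pose proof PI_RGT_0; lra |].
  intros; apply continuity_pt_theta.
Qed.

Lemma continuity_pt_inner th :
  continuity_pt (fun u => RInt (fun s => f u s) (- rho) rho) th.
Proof. exact (continuity_RInt_param f fx _ _ fx_deriv fx_cont ex_RInt_sigma th). Qed.

Lemma bdry_length_RInt s : bdry_length f s = RInt (fun th => f th s) 0 (2 * PI).
Proof.
  apply Rint_eq_RInt; [pose proof PI_RGT_0; lra |].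
  intros; apply continuity_pt_theta.
Qed.

Lemma area_RInt :
  area f rho = RInt (fun th => RInt (fun s => f th s) (- rho) rho) 0 (2 * PI).
Proof.
  unfold area.
  replace (fun th => Rint (fun s => f th s) (- rho) rho)
    with (fun th => RInt (fun s => f th s) (- rho) rho).
  - apply Rint_eq_RInt; [pose proof PI_RGT_0; lra |].
    intros; apply continuity_pt_inner.
  - apply functional_extensionality; intro th; symmetry.
    apply Rint_eq_RInt; [lra | intros; apply continuity_pt_sigma].
Qed.

Lemma ex_RInt_inner :
  ex_RInt (fun th => RInt (fun s => f th s) (- rho) rho) 0 (2 * PI).
Proof.
  apply ex_RInt_continuity_pt; [pose proof PI_RGT_0; lra |].
  intros; apply continuity_pt_inner.
Qed.

Lemma area_between_boundary_lengths (k : R) (t : R) :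
  (forall th s, - rho <= s <= rho ->
     f th t * exp (- k) <= f th s <= f th t * exp k) ->
  2 * rho * exp (- k) * bdry_length f t <= area f rho
    <= 2 * rho * exp k * bdry_length f t.
Proof.
  intros Hpw.
  rewrite bdry_length_RInt, area_RInt.
  apply RInt_scal_bounds;
    [pose proof PI_RGT_0; lra | apply ex_RInt_theta | apply ex_RInt_inner |].
  intros th _.
  assert (Hsigma := RInt_scal_bounds (fun _ => f th t) (fun s => f th s)
    (- rho) rho (exp (- k)) (exp k) ltac:(lra) (ex_RInt_const _ _ _)
    (ex_RInt_sigma th) ltac:(intros s Hs; specialize (Hpw th s Hs); lra)).
  rewrite (RInt_const (- rho) rho (f th t)
            : RInt (fun _ => f th t) (- rho) rho = (rho - - rho) * f th t) in Hsigma.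
  split; nra.
Qed.

End Integrals.

Theorem lemma2p3 (rho alpha C : R) (f fs fss : R -> R -> R) :
  0 < rho ->
  smooth2 f ->
  (forall th s, f (th + 2 * PI) s = f th s) ->
  (forall th s, 0 < f th s) ->
  (forall th s, derivable_pt_lim (fun t => f th t) s (fs th s)) ->
  (forall th s, derivable_pt_lim (fun t => fs th t) s (fss th s)) ->
  0 < alpha -> 0 <= C ->
  (forall th s, -rho <= s <= rho -> scal_curv f fss th s >= - alpha) ->
  (forall th, Rabs (geod_curv_top f fs rho th) <= C) ->
  (forall th, Rabs (geod_curv_bot f fs rho th) <= C) ->
  let L := Rmin (bdry_length f rho) (bdry_length f (- rho)) in
  2 * rho * L * exp (- (2 * rho * (alpha * rho + C))) <= area f rho /\
  area f rho <= 2 * rho * L * exp (2 * rho * (alpha * rho + C)).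
Proof.
  intros Hrho Hsmooth _ Hpos Hfs Hfss Halpha HC Hcurv Htop Hbot L.
  set (K := 2 * rho * (alpha * rho + C)).
  destruct (Hsmooth 1%nat) as [_ [fx [_ [Hfx [_ [[Hfx_cont _] _]]]]]].
  assert (Hprofile : forall th t s, - rho <= s <= rho -> - rho <= t <= rho ->
            f th t * exp (- K) <= f th s <= f th t * exp K).
  { intros th t s Hs Ht.
    replace K with ((C + alpha / 2 * (rho - - rho)) * (rho - - rho))
      by (unfold K; field).
    apply (profile_within_exp (fun s => f th s) (fun s => fs th s) (fun s => fss th s));
      auto; try lra.
    - intros u Hu. specialize (Hcurv th u Hu).
      unfold scal_curv, Rdiv in *; lra.
    - specialize (Hbot th); unfold geod_curv_bot in Hbot.
      now rewrite Rabs_Ropp in Hbot.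
    - apply Htop. }
  assert (Hboundary : forall t, - rho <= t <= rho ->
            2 * rho * exp (- K) * bdry_length f t <= area f rho
              <= 2 * rho * exp K * bdry_length f t)
    by (intros t Ht; apply (area_between_boundary_lengths f fs fx); auto).
  assert (Hk : 0 < 2 * rho * exp (- K)) by (pose proof (exp_pos (- K)); nra).
  destruct (Hboundary rho ltac:(lra)), (Hboundary (- rho) ltac:(lra)).
  unfold L, Rmin; destruct Rle_dec; split; nra.
Qed.
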